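(* Let $\mathcal{E}$ be a monoidal category, $\mathcal{K}$ a bicategory with (at least) two objects $0$ and $1$, and $\mathcal{F},\mathcal{G}:Del(\mathcal{E})\to\mathcal{K}$ lax functors with $\mathcal{F}( * )=0$ and $\mathcal{G}( * )=1$. Put $\mathcal{D}=\mathcal{K}(0,0)$, $\mathcal{C}=\mathcal{K}(1,1)$, $\mathcal{M}=\mathcal{K}(0,1)$ (a $(\mathcal{C},\mathcal{D})$-bimodule category via horizontal composition), $F=\mathcal{F}_{*,*}:\mathcal{E}\to\mathcal{D}$ and $G=\mathcal{G}_{*,*}:\mathcal{E}\to\mathcal{C}$ (lax monoidal functors). Then there are canonical isomorphisms of categories $\mathcal{Z}^w_l(F,\mathcal{M},G)\cong\mathrm{Colax}(\mathcal{F},\mathcal{G})$, $\mathcal{Z}^s_l(F,\mathcal{M},G)\cong\mathrm{Pseudo}(\mathcal{F},\mathcal{G})$, $\mathcal{Z}^w_r(F,\mathcal{M},G)\cong\mathrm{Lax}(\mathcal{F},\mathcal{G})$ and $\mathcal{Z}^s_r(F,\mathcal{M},G)\cong\mathrm{Pseudo}(\mathcal{F},\mathcal{G})$.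
   Context: $Del(\mathcal{E})$ is the one-object bicategory (object $*$) with hom-category $\mathcal{E}$ and horizontal composition given by $\otimes$, composite $g\circ f$ corresponding to $g\otimes f$. The bimodule actions are $c\rhd m=c\circ m$ and $m\lhd d=m\circ d$. For lax monoidal $F:\mathcal{E}\to\mathcal{D}$, $G:\mathcal{E}\to\mathcal{C}$: $\mathcal{Z}^w_l(F,\mathcal{M},G)$ has objects $(M,\sigma)$, $M\in\mathcal{M}$, $\sigma_X:M\lhd F(X)\to G(X)\rhd M$ natural with $(G^2_{Y,X}\rhd M)(\mathrm{id}\rhd\sigma_X)(\sigma_Y\lhd\mathrm{id})=\sigma_{Y\otimes X}(M\lhd F^2_{Y,X})$ and $\sigma_I(M\lhd F^0)=G^0\rhd M$, morphisms $f$ with $(\mathrm{id}_{G(X)}\rhd f)\sigma_X=\tau_X(f\lhd\mathrm{id}_{F(X)})$; $\mathcal{Z}^w_r(F,\mathcal{M},G)$ has objects $(M,\tilde\sigma)$ with $\tilde\sigma_X:G(X)\rhd M\to M\lhd F(X)$ natural, $(M\lhd F^2_{Y,X})(\tilde\sigma_Y\lhd\mathrm{id})(\mathrm{id}\rhd\tilde\sigma_X)=\tilde\sigma_{Y\otimes X}(G^2_{Y,X}\rhd M)$, $\tilde\sigma_I(G^0\rhd M)=M\lhd F^0$, morphisms $f$ with $(f\lhd\mathrm{id})\tilde\sigma_X=\tilde\tau_X(\mathrm{id}\rhd f)$; superscript $s$ means the full subcategory with invertible half-braidings. $\mathrm{Colax}(\mathcal{F},\mathcal{G})$, $\mathrm{Lax}(\mathcal{F},\mathcal{G})$,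 $\mathrm{Pseudo}(\mathcal{F},\mathcal{G})$ are the categories of colax, lax, pseudonatural transformations $\mathcal{F}\Rightarrow\mathcal{G}$ and modifications. A colax natural transformation has 1-cells $\chi_A$ and 2-cells $\chi_f:\chi_B\circ\mathcal{F}(f)\Rightarrow\mathcal{G}(f)\circ\chi_A$ natural in $f$ with $(\mathcal{G}^2_{g,f}\circ1)\cdot(1\circ\chi_f)\cdot(\chi_g\circ1)=\chi_{gf}\cdot(1\circ\mathcal{F}^2_{g,f})$ and $\chi_{\mathrm{id}}\cdot(1\circ\mathcal{F}^0)=\mathcal{G}^0\circ1$; a lax one has $\psi_f:\mathcal{G}(f)\circ\psi_A\Rightarrow\psi_B\circ\mathcal{F}(f)$ with the vertically dual conditions; pseudonatural means invertible 2-cells. A modification is a family $a_A:\chi_A\Rightarrow\chi'_A$ compatible with the 2-cells $\chi_f,\chi'_f$. *)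

From Stdlib Require Import ProofIrrelevance FunctionalExtensionality.

Set Implicit Arguments.
Unset Strict Implicit.
Set Universe Polymorphism.

(** * Categories (2-cell equality is Leibniz equality) *)

Record Category := {
  ob :> Type;
  hom : ob -> ob -> Type;
  idm : forall a, hom a a;
  vcomp : forall a b c, hom b c -> hom a b -> hom a c;
  vcomp_idl : forall a b (f : hom a b), vcomp (idm b) f = f;
  vcomp_idr : forall a b (f : hom a b), vcomp f (idm a) = f;
  vcomp_assoc : forall a b c d (h : hom c d) (g : hom b c) (f : hom a b),
      vcomp h (vcomp g f) = vcomp (vcomp h g) f }.

Arguments hom {_} _ _.
Arguments idm {_} _.
Arguments vcomp {_ _ _ _} _ _.
Notation "g · f" := (vcomp g f) (at level 40, left associativity).

Record Functor (C D : Category) := {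
  fobj :> C -> D;
  fmap : forall a b, hom a b -> hom (fobj a) (fobj b);
  fmap_id : forall a, fmap (idm a) = idm (fobj a);
  fmap_comp : forall a b c (g : hom b c) (f : hom a b),
      fmap (g · f) = fmap g · fmap f }.
Arguments fmap {_ _} _ {_ _} _.

Definition Fun_id_data (C : Category) : Functor C C.
Proof.
  refine {| fobj := fun a => a; fmap := fun a b f => f |}; reflexivity.
Defined.

Definition Fun_comp (C D E : Category) (G : Functor D E) (F : Functor C D)
  : Functor C E.
Proof.
  refine {| fobj := fun a => G (F a); fmap := fun a b f => fmap G (fmap F f) |}.
  - intros a. rewrite fmap_id. apply fmap_id.
  - intros a b c g f. rewrite fmap_comp. apply fmap_comp.
Defined.

Definition transp_hom (C : Category) (a a' b b' : C) (ea : a = a') (eb : b = b')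
  (f : hom a b) : hom a' b' :=
  match ea in _ = x return hom x b' with
  | eq_refl => match eb in _ = y return hom a y with eq_refl => f end
  end.

Definition functor_eq (C D : Category) (F G : Functor C D) : Prop :=
  exists e : forall a, F a = G a,
    forall a b (f : hom a b), transp_hom (e a) (e b) (fmap F f) = fmap G f.

Definition cat_iso (C D : Category) : Prop :=
  exists (Phi : Functor C D) (Psi : Functor D C),
    functor_eq (Fun_comp Psi Phi) (Fun_id_data C) /\
    functor_eq (Fun_comp Phi Psi) (Fun_id_data D).

Definition FullSub (C : Category) (P : C -> Prop) : Category.
Proof.
  refine {| ob := {a : C | P a};
            hom := fun a b => hom (proj1_sig a) (proj1_sig b);
            idm := fun a => idm (proj1_sig a);
            vcomp := fun a b c g f => g · f |}.
  - intros; apply vcomp_idl.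
  - intros; apply vcomp_idr.
  - intros; apply vcomp_assoc.
Defined.

Definition is_iso (C : Category) (a b : C) (f : hom a b) : Prop :=
  exists g : hom b a, g · f = idm a /\ f · g = idm b.

(** * Monoidal categories *)

Record MonData := {
  mcat :> Category;
  tens : mcat -> mcat -> mcat;
  tens1 : forall X X' Y Y', hom X X' -> hom Y Y' -> hom (tens X Y) (tens X' Y');
  munit : mcat;
  massoc : forall X Y Z, hom (tens (tens X Y) Z) (tens X (tens Y Z));
  massoc_inv : forall X Y Z, hom (tens X (tens Y Z)) (tens (tens X Y) Z);
  mlu : forall X, hom (tens munit X) X;
  mlu_inv : forall X, hom X (tens munit X);
  mru : forall X, hom (tens X munit) X;
  mru_inv : forall X, hom X (tens X munit) }.
Arguments tens {_} _ _.
Arguments tens1 {_ _ _ _ _} _ _.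
Arguments munit {_}.
Arguments massoc {_} _ _ _.
Arguments massoc_inv {_} _ _ _.
Arguments mlu {_} _.
Arguments mlu_inv {_} _.
Arguments mru {_} _.
Arguments mru_inv {_} _.

Record MonLaws (E : MonData) : Prop := {
  tens1_id : forall X Y : E, tens1 (idm X) (idm Y) = idm (tens X Y);
  tens1_comp : forall (X X' X'' Y Y' Y'' : E) (f' : hom X' X'') (f : hom X X')
      (g' : hom Y' Y'') (g : hom Y Y'),
      tens1 (f' · f) (g' · g) = tens1 f' g' · tens1 f g;
  massoc_iso1 : forall X Y Z : E, massoc_inv X Y Z · massoc X Y Z = idm _;
  massoc_iso2 : forall X Y Z : E, massoc X Y Z · massoc_inv X Y Z = idm _;
  massoc_nat : forall (X X' Y Y' Z Z' : E) (f : hom X X') (g : hom Y Y') (h : hom Z Z'),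
      massoc X' Y' Z' · tens1 (tens1 f g) h = tens1 f (tens1 g h) · massoc X Y Z;
  mlu_iso1 : forall X : E, mlu_inv X · mlu X = idm _;
  mlu_iso2 : forall X : E, mlu X · mlu_inv X = idm _;
  mlu_nat : forall (X X' : E) (f : hom X X'), mlu X' · tens1 (idm munit) f = f · mlu X;
  mru_iso1 : forall X : E, mru_inv X · mru X = idm _;
  mru_iso2 : forall X : E, mru X · mru_inv X = idm _;
  mru_nat : forall (X X' : E) (f : hom X X'), mru X' · tens1 f (idm munit) = f · mru X;
  mpentagon : forall W X Y Z : E,
      massoc W X (tens Y Z) · massoc (tens W X) Y Z
      = tens1 (idm W) (massoc X Y Z) · massoc W (tens X Y) Z
        · tens1 (massoc W X Y) (idm Z);
  mtriangle : forall X Y : E,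
      tens1 (idm X) (mlu Y) · massoc X munit Y = tens1 (mru X) (idm Y) }.

Record MonoidalCategory := {
  mdata :> MonData;
  mlaws : MonLaws mdata }.

(** * Bicategories.  [cell a b] is the hom-category K(a,b); [hc g f] is the
    horizontal composite g∘f of f : a -> b and g : b -> c. *)

Record BicatData := {
  bob : Type;
  cell : bob -> bob -> Category;
  hc : forall a b c, cell b c -> cell a b -> cell a c;
  hc1 : forall a b c (g g' : cell b c) (f f' : cell a b),
      hom g g' -> hom f f' -> hom (hc g f) (hc g' f');
  bid : forall a, cell a a;
  bassoc : forall a b c d (h : cell c d) (g : cell b c) (f : cell a b),
      hom (hc (hc h g) f) (hc h (hc g f));
  bassoc_inv : forall a b c d (h : cell c d) (g : cell b c) (f : cell a b),
      hom (hc h (hc g f)) (hc (hc h g) f);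
  blu : forall a b (f : cell a b), hom (hc (bid b) f) f;
  blu_inv : forall a b (f : cell a b), hom f (hc (bid b) f);
  bru : forall a b (f : cell a b), hom (hc f (bid a)) f;
  bru_inv : forall a b (f : cell a b), hom f (hc f (bid a)) }.
Arguments cell {_} _ _.
Arguments hc {_ _ _ _} _ _.
Arguments hc1 {_ _ _ _ _ _ _ _} _ _.
Arguments bid {_} _.
Arguments bassoc {_ _ _ _ _} _ _ _.
Arguments bassoc_inv {_ _ _ _ _} _ _ _.
Arguments blu {_ _ _} _.
Arguments blu_inv {_ _ _} _.
Arguments bru {_ _ _} _.
Arguments bru_inv {_ _ _} _.
Notation "g ∘ f" := (hc g f) (at level 35, right associativity).
Notation "β ⋆ α" := (hc1 β α) (at level 35, right associativity).

Record BicatLaws (K : BicatData) : Prop := {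
  hc1_id : forall (a b c : bob K) (g : cell b c) (f : cell a b),
      idm g ⋆ idm f = idm (g ∘ f);
  hc1_comp : forall (a b c : bob K) (g g' g'' : cell b c) (f f' f'' : cell a b)
      (β' : hom g' g'') (β : hom g g') (α' : hom f' f'') (α : hom f f'),
      (β' · β) ⋆ (α' · α) = (β' ⋆ α') · (β ⋆ α);
  bassoc_iso1 : forall (a b c d : bob K) (h : cell c d) (g : cell b c) (f : cell a b),
      bassoc_inv h g f · bassoc h g f = idm _;
  bassoc_iso2 : forall (a b c d : bob K) (h : cell c d) (g : cell b c) (f : cell a b),
      bassoc h g f · bassoc_inv h g f = idm _;
  bassoc_nat : forall (a b c d : bob K) (h h' : cell c d) (g g' : cell b c)
      (f f' : cell a b) (γ : hom h h') (β : hom g g') (α : hom f f'),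
      bassoc h' g' f' · ((γ ⋆ β) ⋆ α) = (γ ⋆ (β ⋆ α)) · bassoc h g f;
  blu_iso1 : forall (a b : bob K) (f : cell a b), blu_inv f · blu f = idm _;
  blu_iso2 : forall (a b : bob K) (f : cell a b), blu f · blu_inv f = idm _;
  blu_nat : forall (a b : bob K) (f f' : cell a b) (α : hom f f'),
      blu f' · (idm (bid b) ⋆ α) = α · blu f;
  bru_iso1 : forall (a b : bob K) (f : cell a b), bru_inv f · bru f = idm _;
  bru_iso2 : forall (a b : bob K) (f : cell a b), bru f · bru_inv f = idm _;
  bru_nat : forall (a b : bob K) (f f' : cell a b) (α : hom f f'),
      bru f' · (α ⋆ idm (bid a)) = α · bru f;
  bpentagon : forall (a b c d e : bob K) (k : cell d e) (h : cell c d)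
      (g : cell b c) (f : cell a b),
      bassoc k h (g ∘ f) · bassoc (k ∘ h) g f
      = (idm k ⋆ bassoc h g f) · bassoc k (h ∘ g) f · (bassoc k h g ⋆ idm f);
  btriangle : forall (a b c : bob K) (g : cell b c) (f : cell a b),
      (idm g ⋆ blu f) · bassoc g (bid b) f = bru g ⋆ idm f }.

Record Bicategory := {
  bdata :> BicatData;
  blaws : BicatLaws bdata }.

Definition Del_data (E : MonData) : BicatData :=
  {| bob := unit;
     cell := fun _ _ => mcat E;
     hc := fun _ _ _ g f => tens g f;
     hc1 := fun _ _ _ g g' f f' β α => tens1 β α;
     bid := fun _ => munit;
     bassoc := fun _ _ _ _ h g f => massoc h g f;
     bassoc_inv := fun _ _ _ _ h g f => massoc_inv h g f;
     blu := fun _ _ f => mlu f;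
     blu_inv := fun _ _ f => mlu_inv f;
     bru := fun _ _ f => mru f;
     bru_inv := fun _ _ f => mru_inv f |}.

Definition Del (E : MonoidalCategory) : Bicategory.
Proof.
  refine {| bdata := Del_data E |}.
  destruct E as [E L]; destruct L; constructor; simpl; intros; auto.
Defined.

Lemma sig_ext (A : Type) (P : A -> Prop) (x y : sig P) :
  proj1_sig x = proj1_sig y -> x = y.
Proof.
  destruct x as [x px], y as [y py]; simpl; intros ->.
  f_equal; apply proof_irrelevance.
Qed.

Lemma paste (C : Category) (x1 x2 x3 y1 y2 y3 : C) (s : hom x1 y1)
  (s' : hom x2 y2) (s'' : hom x3 y3) (m1 : hom x1 x2) (m2 : hom x2 x3)
  (n1 : hom y1 y2) (n2 : hom y2 y3) :
  s' · m1 = n1 · s -> s'' · m2 = n2 · s' -> s'' · (m2 · m1) = (n2 · n1) · s.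
Proof.
  intros H1 H2. rewrite vcomp_assoc, H2, <- vcomp_assoc, H1, vcomp_assoc.
  reflexivity.
Qed.

Definition FamCat (O I : Type) (Cf : I -> Category) (p : O -> forall i, Cf i)
  (R : forall o o', (forall i, hom (p o i) (p o' i)) -> Prop)
  (Rid : forall o, R o o (fun i => idm (p o i)))
  (Rcomp : forall o o' o'' (m : forall i, hom (p o i) (p o' i))
             (n : forall i, hom (p o' i) (p o'' i)),
             R o o' m -> R o' o'' n -> R o o'' (fun i => n i · m i)) : Category.
Proof.
  refine {| ob := O;
            hom := fun o o' => {m : forall i, hom (p o i) (p o' i) | R o o' m};
            idm := fun o => exist _ _ (Rid o);
            vcomp := fun o o' o'' n m =>
              exist _ _ (Rcomp o o' o'' _ _ (proj2_sig m) (proj2_sig n)) |}.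
  - intros; apply sig_ext; simpl; apply functional_extensionality_dep;
      intros; apply vcomp_idl.
  - intros; apply sig_ext; simpl; apply functional_extensionality_dep;
      intros; apply vcomp_idr.
  - intros; apply sig_ext; simpl; apply functional_extensionality_dep;
      intros; apply vcomp_assoc.
Defined.

Section BicatFacts.
Variable K : Bicategory.

Lemma whiskR_comp (a b c : bob K) (g g' g'' : cell b c) (f : cell a b)
  (β' : hom g' g'') (β : hom g g') :
  (β' · β) ⋆ idm f = (β' ⋆ idm f) · (β ⋆ idm f).
Proof.
  transitivity ((β' · β) ⋆ (idm f · idm f)).
  - now rewrite vcomp_idl.
  - apply (hc1_comp (blaws K)).
Qed.

Lemma whiskL_comp (a b c : bob K) (g : cell b c) (f f' f'' : cell a b)
  (α' : hom f' f'') (α : hom f f') :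
  idm g ⋆ (α' · α) = (idm g ⋆ α') · (idm g ⋆ α).
Proof.
  transitivity ((idm g · idm g) ⋆ (α' · α)).
  - now rewrite vcomp_idl.
  - apply (hc1_comp (blaws K)).
Qed.

Lemma id_square (C : Category) (x y : C) (s : hom x y) : s · idm x = idm y · s.
Proof. now rewrite vcomp_idl, vcomp_idr. Qed.

End BicatFacts.

(** * Lax functors between bicategories *)

Record LaxFunctorData (A B : BicatData) := {
  lobj : bob A -> bob B;
  lhom : forall a b, Functor (cell a b) (cell (lobj a) (lobj b));
  lf2 : forall a b c (g : cell b c) (f : cell a b),
      hom (lhom b c g ∘ lhom a b f) (lhom a c (g ∘ f));
  lf0 : forall a, hom (bid (lobj a)) (lhom a a (bid a)) }.
Arguments lobj {A B} _ _.
Arguments lhom {A B} _ _ _.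
Arguments lf2 {A B} _ {a b c} _ _.
Arguments lf0 {A B} _ _.

Definition lF (A B : BicatData) (F : LaxFunctorData A B) (a b : bob A)
  (f : cell a b) : cell (lobj F a) (lobj F b) := lhom F a b f.
Definition lF1 (A B : BicatData) (F : LaxFunctorData A B) (a b : bob A)
  (f f' : cell a b) (u : hom f f') : hom (lF F f) (lF F f') := fmap (lhom F a b) u.
Arguments lF {A B} F {a b} f.
Arguments lF1 {A B} F {a b f f'} u.

Record LaxFunctorLaws (A B : BicatData) (F : LaxFunctorData A B) : Prop := {
  lf2_nat : forall (a b c : bob A) (g g' : cell b c) (f f' : cell a b)
      (β : hom g g') (α : hom f f'),
      lf2 F g' f' · (lF1 F β ⋆ lF1 F α) = lF1 F (β ⋆ α) · lf2 F g f;
  lf_assoc : forall (a b c d : bob A) (h : cell c d) (g : cell b c) (f : cell a b),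
      lf2 F h (g ∘ f) · (idm (lF F h) ⋆ lf2 F g f) · bassoc (lF F h) (lF F g) (lF F f)
      = lF1 F (bassoc h g f) · lf2 F (h ∘ g) f · (lf2 F h g ⋆ idm (lF F f));
  lf_lunit : forall (a b : bob A) (f : cell a b),
      lF1 F (blu f) · lf2 F (bid b) f · (lf0 F b ⋆ idm (lF F f)) = blu (lF F f);
  lf_runit : forall (a b : bob A) (f : cell a b),
      lF1 F (bru f) · lf2 F f (bid a) · (idm (lF F f) ⋆ lf0 F a) = bru (lF F f) }.

Record LaxFunctor (A B : Bicategory) := {
  lfdata :> LaxFunctorData A B;
  lflaws : LaxFunctorLaws lfdata }.

(** * Colax, lax and pseudonatural transformations and modifications *)

Section Transformations.
Variables (A B : Bicategory) (F G : LaxFunctor A B).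

Record ColaxData := {
  cx1 : forall a, cell (lobj F a) (lobj G a);
  cx2 : forall a b (f : cell a b), hom (cx1 b ∘ lF F f) (lF G f ∘ cx1 a) }.

Definition colax_laws (χ : ColaxData) : Prop :=
  (forall (a b : bob A) (f f' : cell a b) (u : hom f f'),
      (lF1 G u ⋆ idm (cx1 χ a)) · cx2 χ f = cx2 χ f' · (idm (cx1 χ b) ⋆ lF1 F u)) /\
  (forall (a b c : bob A) (g : cell b c) (f : cell a b),
      (lf2 G g f ⋆ idm (cx1 χ a)) · bassoc_inv (lF G g) (lF G f) (cx1 χ a)
      · (idm (lF G g) ⋆ cx2 χ f) · bassoc (lF G g) (cx1 χ b) (lF F f)
      · (cx2 χ g ⋆ idm (lF F f)) · bassoc_inv (cx1 χ c) (lF F g) (lF F f)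
      = cx2 χ (g ∘ f) · (idm (cx1 χ c) ⋆ lf2 F g f)) /\
  (forall a : bob A,
      cx2 χ (bid a) · (idm (cx1 χ a) ⋆ lf0 F a)
      = (lf0 G a ⋆ idm (cx1 χ a)) · blu_inv (cx1 χ a) · bru (cx1 χ a)).

Record LaxData := {
  lx1 : forall a, cell (lobj F a) (lobj G a);
  lx2 : forall a b (f : cell a b), hom (lF G f ∘ lx1 a) (lx1 b ∘ lF F f) }.

Definition lax_laws (ψ : LaxData) : Prop :=
  (forall (a b : bob A) (f f' : cell a b) (u : hom f f'),
      (idm (lx1 ψ b) ⋆ lF1 F u) · lx2 ψ f = lx2 ψ f' · (lF1 G u ⋆ idm (lx1 ψ a))) /\
  (forall (a b c : bob A) (g : cell b c) (f : cell a b),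
      (idm (lx1 ψ c) ⋆ lf2 F g f) · bassoc (lx1 ψ c) (lF F g) (lF F f)
      · (lx2 ψ g ⋆ idm (lF F f)) · bassoc_inv (lF G g) (lx1 ψ b) (lF F f)
      · (idm (lF G g) ⋆ lx2 ψ f) · bassoc (lF G g) (lF G f) (lx1 ψ a)
      = lx2 ψ (g ∘ f) · (lf2 G g f ⋆ idm (lx1 ψ a))) /\
  (forall a : bob A,
      lx2 ψ (bid a) · (lf0 G a ⋆ idm (lx1 ψ a))
      = (idm (lx1 ψ a) ⋆ lf0 F a) · bru_inv (lx1 ψ a) · blu (lx1 ψ a)).

Definition colax_modif (χ χ' : {χ : ColaxData | colax_laws χ})
  (m : forall a, hom (cx1 (proj1_sig χ) a) (cx1 (proj1_sig χ') a)) : Prop :=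
  forall (a b : bob A) (f : cell a b),
    cx2 (proj1_sig χ') f · (m b ⋆ idm (lF F f))
    = (idm (lF G f) ⋆ m a) · cx2 (proj1_sig χ) f.
Arguments colax_modif : clear implicits.

Definition lax_modif (ψ ψ' : {ψ : LaxData | lax_laws ψ})
  (m : forall a, hom (lx1 (proj1_sig ψ) a) (lx1 (proj1_sig ψ') a)) : Prop :=
  forall (a b : bob A) (f : cell a b),
    (m b ⋆ idm (lF F f)) · lx2 (proj1_sig ψ) f
    = lx2 (proj1_sig ψ') f · (idm (lF G f) ⋆ m a).
Arguments lax_modif : clear implicits.

Lemma colax_modif_id χ : colax_modif χ χ (fun a => idm _).
Proof.
  intros a b f. rewrite !(hc1_id (blaws B)). apply id_square.
Qed.

Lemma colax_modif_comp χ χ' χ'' m n :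
  colax_modif χ χ' m -> colax_modif χ' χ'' n ->
  colax_modif χ χ'' (fun a => n a · m a).
Proof.
  intros Hm Hn a b f. simpl.
  rewrite whiskR_comp, whiskL_comp. apply paste with (s' := cx2 (proj1_sig χ') f).
  - apply Hm.
  - apply Hn.
Qed.

Lemma lax_modif_id ψ : lax_modif ψ ψ (fun a => idm _).
Proof.
  intros a b f. rewrite !(hc1_id (blaws B)). symmetry. apply id_square.
Qed.

Lemma lax_modif_comp ψ ψ' ψ'' m n :
  lax_modif ψ ψ' m -> lax_modif ψ' ψ'' n ->
  lax_modif ψ ψ'' (fun a => n a · m a).
Proof.
  intros Hm Hn a b f. simpl.
  rewrite whiskR_comp, whiskL_comp. symmetry.
  apply paste with (s' := lx2 (proj1_sig ψ') f).
  - symmetry; apply Hm.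
  - symmetry; apply Hn.
Qed.

Definition Colax : Category :=
  @FamCat {χ : ColaxData | colax_laws χ} (bob A) (fun a => cell (lobj F a) (lobj G a))
    (fun χ => cx1 (proj1_sig χ)) colax_modif colax_modif_id colax_modif_comp.

Definition Lax : Category :=
  @FamCat {ψ : LaxData | lax_laws ψ} (bob A) (fun a => cell (lobj F a) (lobj G a))
    (fun ψ => lx1 (proj1_sig ψ)) lax_modif lax_modif_id lax_modif_comp.

Definition Pseudo : Category :=
  FullSub (C := Colax)
    (fun χ => forall (a b : bob A) (f : cell a b), is_iso (cx2 (proj1_sig χ) f)).

End Transformations.

(** * The categories Z^w_l, Z^s_l, Z^w_r, Z^s_r.
    The lax monoidal functors F : E -> D = K(x,x), G : E -> C = K(y,y) are
    given by their data (functor, F^2, F^0); the (C,D)-bimodule category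
    M = K(x,y) has actions c ▷ m = c ∘ m and m ◁ d = m ∘ d, and its
    associativity/unit constraints are those of the bicategory K. *)

Record LaxMonData (E : MonData) (K : BicatData) (x : bob K) := {
  lmF : Functor E (cell x x);
  lmF2 : forall Y X : E, hom (lmF Y ∘ lmF X) (lmF (tens Y X));
  lmF0 : hom (bid x) (lmF munit) }.
Arguments LaxMonData : clear implicits.
Arguments lmF {E K x} _.
Arguments lmF2 {E K x} _ _ _.
Arguments lmF0 {E K x} _.

Section Centers.
Variables (E : MonoidalCategory) (K : Bicategory) (x y : bob K)
          (F : LaxMonData E K x) (G : LaxMonData E K y).

Definition ZlData := {M : cell x y & forall X : E, hom (M ∘ lmF F X) (lmF G X ∘ M)}.

Definition Zl_laws (p : ZlData) : Prop :=
  let M := projT1 p in let σ := projT2 p in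
  (forall (X X' : E) (u : hom X X'),
      (fmap (lmF G) u ⋆ idm M) · σ X = σ X' · (idm M ⋆ fmap (lmF F) u)) /\
  (forall Y X : E,
      (lmF2 G Y X ⋆ idm M) · bassoc_inv (lmF G Y) (lmF G X) M
      · (idm (lmF G Y) ⋆ σ X) · bassoc (lmF G Y) M (lmF F X)
      · (σ Y ⋆ idm (lmF F X)) · bassoc_inv M (lmF F Y) (lmF F X)
      = σ (tens Y X) · (idm M ⋆ lmF2 F Y X)) /\
  (σ munit · (idm M ⋆ lmF0 F) = (lmF0 G ⋆ idm M) · blu_inv M · bru M).

Definition Zl_mor (p q : {p : ZlData | Zl_laws p})
  (f : unit -> hom (projT1 (proj1_sig p)) (projT1 (proj1_sig q))) : Prop :=
  forall X : E, (idm (lmF G X) ⋆ f tt) · projT2 (proj1_sig p) X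
                = projT2 (proj1_sig q) X · (f tt ⋆ idm (lmF F X)).
Arguments Zl_mor : clear implicits.

Definition ZrData := {M : cell x y & forall X : E, hom (lmF G X ∘ M) (M ∘ lmF F X)}.

Definition Zr_laws (p : ZrData) : Prop :=
  let M := projT1 p in let σ := projT2 p in
  (forall (X X' : E) (u : hom X X'),
      (idm M ⋆ fmap (lmF F) u) · σ X = σ X' · (fmap (lmF G) u ⋆ idm M)) /\
  (forall Y X : E,
      (idm M ⋆ lmF2 F Y X) · bassoc M (lmF F Y) (lmF F X)
      · (σ Y ⋆ idm (lmF F X)) · bassoc_inv (lmF G Y) M (lmF F X)
      · (idm (lmF G Y) ⋆ σ X) · bassoc (lmF G Y) (lmF G X) M
      = σ (tens Y X) · (lmF2 G Y X ⋆ idm M)) /\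
  (σ munit · (lmF0 G ⋆ idm M) = (idm M ⋆ lmF0 F) · bru_inv M · blu M).

Definition Zr_mor (p q : {p : ZrData | Zr_laws p})
  (f : unit -> hom (projT1 (proj1_sig p)) (projT1 (proj1_sig q))) : Prop :=
  forall X : E, (f tt ⋆ idm (lmF F X)) · projT2 (proj1_sig p) X
                = projT2 (proj1_sig q) X · (idm (lmF G X) ⋆ f tt).
Arguments Zr_mor : clear implicits.

Lemma Zl_mor_id p : Zl_mor p p (fun _ => idm _).
Proof. intros X. rewrite !(hc1_id (blaws K)). symmetry; apply id_square. Qed.

Lemma Zl_mor_comp p q r m n :
  Zl_mor p q m -> Zl_mor q r n -> Zl_mor p r (fun i => n i · m i).
Proof.
  intros Hm Hn X. simpl. rewrite whiskR_comp, whiskL_comp. symmetry.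
  apply paste with (s' := projT2 (proj1_sig q) X).
  - symmetry; apply Hm.
  - symmetry; apply Hn.
Qed.

Lemma Zr_mor_id p : Zr_mor p p (fun _ => idm _).
Proof. intros X. rewrite !(hc1_id (blaws K)). symmetry; apply id_square. Qed.

Lemma Zr_mor_comp p q r m n :
  Zr_mor p q m -> Zr_mor q r n -> Zr_mor p r (fun i => n i · m i).
Proof.
  intros Hm Hn X. simpl. rewrite whiskR_comp, whiskL_comp. symmetry.
  apply paste with (s' := projT2 (proj1_sig q) X).
  - symmetry; apply Hm.
  - symmetry; apply Hn.
Qed.

(** Z^w_l(F,M,G): morphisms (M,σ) -> (N,τ) are f : M => N with
    (id ▷ f) σ_X = τ_X (f ◁ id). (The index type [unit] only packages a
    single 2-cell f = f tt.) *)
Definition Z_wl : Category :=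
  @FamCat {p : ZlData | Zl_laws p} unit (fun _ => cell x y)
    (fun p _ => projT1 (proj1_sig p)) Zl_mor Zl_mor_id Zl_mor_comp.

Definition Z_sl : Category :=
  FullSub (C := Z_wl) (fun p => forall X : E, is_iso (projT2 (proj1_sig p) X)).

Definition Z_wr : Category :=
  @FamCat {p : ZrData | Zr_laws p} unit (fun _ => cell x y)
    (fun p _ => projT1 (proj1_sig p)) Zr_mor Zr_mor_id Zr_mor_comp.

Definition Z_sr : Category :=
  FullSub (C := Z_wr) (fun p => forall X : E, is_iso (projT2 (proj1_sig p) X)).

End Centers.

Definition laxmon_of (E : MonoidalCategory) (K : Bicategory)
  (F : LaxFunctor (Del E) K) : LaxMonData E K (lobj F tt) :=
  {| lmF := lhom F tt tt;
     lmF2 := fun Y X => @lf2 _ _ F tt tt tt Y X;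
     lmF0 := lf0 F tt |}.

(* Del(E) has a single object with hom-category E, so a colax transformation F => G
   amounts to one 1-cell M : F * -> G * with 2-cells M ∘ F X => G X ∘ M, and its three
   axioms (naturality, compatibility with F^2, G^2 and with F^0, G^0) are literally those
   of a left half-braiding; modifications are exactly the morphisms of Z^w_l.  Likewise
   lax transformations are right half-braidings.  In the strong case, inverting the
   half-braiding exchanges Z^s_r and Z^s_l: every axiom is a commutative square whose two
   parallel sides are invertible, and inverting those sides gives the square required on
   the other side. *)

From Stdlib Require Import Setoid ProofIrrelevance FunctionalExtensionality IndefiniteDescription.
Set Implicit Arguments.
Unset Strict Implicit.

Lemma transp_hom_irrel (C : Category) (a a' b b' : C) (p p' : a = a') (r r' : b = b')
  (f : hom a b) :
  transp_hom p r f = transp_hom p' r' f.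
Proof. now rewrite (proof_irrelevance _ p p'), (proof_irrelevance _ r r'). Qed.

Lemma transp_hom_refl (C : Category) (a b : C) (ea : a = a) (eb : b = b) (f : hom a b) :
  transp_hom ea eb f = f.
Proof. exact (transp_hom_irrel ea eq_refl eb eq_refl f). Qed.

Lemma transp_hom_trans (C : Category) (a a' a'' b b' b'' : C) (p : a = a') (q : a' = a'')
  (r : b = b') (s : b' = b'') (f : hom a b) :
  transp_hom (eq_trans p q) (eq_trans r s) f = transp_hom q s (transp_hom p r f).
Proof. now destruct p, q, r, s. Qed.

Lemma transp_hom_fmap (C D : Category) (H : Functor C D) (a a' b b' : C)
  (p : a = a') (r : b = b') (f : hom a b) :
  transp_hom (f_equal H p) (f_equal H r) (fmap H f) = fmap H (transp_hom p r f).
Proof. now destruct p, r. Qed.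

Lemma transp_hom_fullsub (C : Category) (P : C -> Prop) (a a' b b' : FullSub P)
  (p : a = a') (r : b = b') (f : hom a b) (g : hom a' b') :
  transp_hom (C := C) (f_equal (@proj1_sig _ _) p) (f_equal (@proj1_sig _ _) r) f = g ->
  transp_hom p r f = g.
Proof. now destruct p, r. Qed.

Lemma transp_hom_famcat O I Cf p R Rid Rcomp (o1 o1' o2 o2' : O)
  (e1 : o1 = o1') (e2 : o2 = o2') (m : hom (c0 := @FamCat O I Cf p R Rid Rcomp) o1 o2)
  (m' : hom (c0 := @FamCat O I Cf p R Rid Rcomp) o1' o2') :
  (forall i, transp_hom (f_equal (fun o => p o i) e1) (f_equal (fun o => p o i) e2)
               (proj1_sig m i) = proj1_sig m' i) ->
  transp_hom (C := @FamCat O I Cf p R Rid Rcomp) e1 e2 m = m'.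
Proof.
  destruct e1, e2; intros h.
  apply sig_ext, functional_extensionality_dep; exact h.
Qed.

Lemma functor_eq_trans (C D : Category) (H1 H2 H3 : Functor C D) :
  functor_eq H1 H2 -> functor_eq H2 H3 -> functor_eq H1 H3.
Proof.
  intros [e1 h1] [e2 h2]; exists (fun a => eq_trans (e1 a) (e2 a)).
  intros; now rewrite transp_hom_trans, h1, h2.
Qed.

Lemma functor_eq_compl (C D D' : Category) (H : Functor D D') (H1 H2 : Functor C D) :
  functor_eq H1 H2 -> functor_eq (Fun_comp H H1) (Fun_comp H H2).
Proof.
  intros [e h]; exists (fun a => f_equal H (e a)).
  intros; simpl; now rewrite transp_hom_fmap, h.
Qed.

Lemma functor_eq_compr (C C' D : Category) (H : Functor C' C) (H1 H2 : Functor C D) :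
  functor_eq H1 H2 -> functor_eq (Fun_comp H1 H) (Fun_comp H2 H).
Proof. intros [e h]; exists (fun a => e (H a)); intros; apply h. Qed.

Lemma functor_eq_comp_idl (C D : Category) (H : Functor C D) :
  functor_eq (Fun_comp (Fun_id_data D) H) H.
Proof. now exists (fun a => eq_refl). Qed.

Lemma functor_eq_cancel (C D X : Category) (P : Functor C D) (Q : Functor D C)
  (P' : Functor D X) (Q' : Functor X D) :
  functor_eq (Fun_comp Q' P') (Fun_id_data D) ->
  functor_eq (Fun_comp Q P) (Fun_id_data C) ->
  functor_eq (Fun_comp Q (Fun_comp Q' (Fun_comp P' P))) (Fun_id_data C).
Proof.
  intros h' h; eapply functor_eq_trans; [apply functor_eq_compl | exact h].
  eapply functor_eq_trans; [exact (functor_eq_compr P h') | apply functor_eq_comp_idl].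
Qed.

Lemma cat_iso_trans (C1 C2 C3 : Category) : cat_iso C1 C2 -> cat_iso C2 C3 -> cat_iso C1 C3.
Proof.
  intros [P1 [Q1 [h1 h1']]] [P2 [Q2 [h2 h2']]].
  exists (Fun_comp P2 P1), (Fun_comp Q1 Q2); split.
  - exact (functor_eq_cancel h2 h1).
  - exact (functor_eq_cancel h1' h2').
Qed.

Definition restrict (C D : Category) (P : C -> Prop) (Q : D -> Prop) (H : Functor C D)
  (hPQ : forall a, P a -> Q (H a)) : Functor (FullSub P) (FullSub Q).
Proof.
  refine {| fobj := fun a : FullSub P =>
              (exist Q (H (proj1_sig a)) (hPQ _ (proj2_sig a)) : FullSub Q);
            fmap := fun (a b : FullSub P) (f : hom a b) =>
              fmap H (a := proj1_sig a) (b := proj1_sig b) f |}.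
  - intros; apply (fmap_id H).
  - intros; apply (fmap_comp H).
Defined.

Lemma functor_eq_restrict (C : Category) (P : C -> Prop) (H : Functor C C)
  (hPP : forall a, P a -> P (H a)) :
  functor_eq H (Fun_id_data C) -> functor_eq (restrict hPP) (Fun_id_data (FullSub P)).
Proof.
  intros [e h].
  exists (fun a => sig_ext (x := restrict hPP a) (y := a) (e (proj1_sig a))).
  intros a b f; apply transp_hom_fullsub.
  etransitivity; [apply (transp_hom_irrel (C := C) _ (e (proj1_sig a)) _ (e (proj1_sig b)))
                 | exact (h _ _ f)].
Qed.

Lemma cat_iso_restrict (C D : Category) (P : C -> Prop) (Q : D -> Prop)
  (Phi : Functor C D) (Psi : Functor D C) :
  functor_eq (Fun_comp Psi Phi) (Fun_id_data C) ->
  functor_eq (Fun_comp Phi Psi) (Fun_id_data D) ->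
  (forall a, P a -> Q (Phi a)) -> (forall b, Q b -> P (Psi b)) ->
  cat_iso (FullSub P) (FullSub Q).
Proof.
  intros h1 h2 hPQ hQP; exists (restrict hPQ), (restrict hQP); split.
  - exact (functor_eq_restrict (H := Fun_comp Psi Phi) (fun a pa => hQP _ (hPQ a pa)) h1).
  - exact (functor_eq_restrict (H := Fun_comp Phi Psi) (fun b qb => hPQ _ (hQP b qb)) h2).
Qed.

Definition inv_pair (C : Category) (a b : C) (f : hom a b) (g : hom b a) : Prop :=
  g · f = idm a /\ f · g = idm b.

Definition inv_of (C : Category) (a b : C) (f : hom a b) (h : is_iso f) : hom b a :=
  proj1_sig (constructive_indefinite_description _ h).

Lemma inv_of_pair (C : Category) (a b : C) (f : hom a b) (h : is_iso f) :
  inv_pair f (inv_of h).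
Proof. exact (proj2_sig (constructive_indefinite_description _ h)). Qed.

Lemma inv_pair_sym (C : Category) (a b : C) (f : hom a b) (g : hom b a) :
  inv_pair f g -> inv_pair g f.
Proof. now intros [h1 h2]. Qed.

Lemma inv_pair_unique (C : Category) (a b : C) (f : hom a b) (g g' : hom b a) :
  inv_pair f g -> inv_pair f g' -> g = g'.
Proof.
  intros [h1 h2] [h1' h2'].
  now rewrite <- (vcomp_idr g), <- h2', vcomp_assoc, h1, vcomp_idl.
Qed.

Lemma inv_pair_comp (C : Category) (a b c : C) (f1 : hom a b) (g1 : hom b a)
  (f2 : hom b c) (g2 : hom c b) :
  inv_pair f1 g1 -> inv_pair f2 g2 -> inv_pair (f2 · f1) (g1 · g2).
Proof.
  intros [h1 h2] [k1 k2]; split.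
  - now rewrite <- vcomp_assoc, (vcomp_assoc g2), k1, vcomp_idl, h1.
  - now rewrite <- vcomp_assoc, (vcomp_assoc f1), h2, vcomp_idl, k2.
Qed.

Lemma square_inv (C : Category) (x1 x2 y1 y2 : C) (s1 : hom x1 y1) (t1 : hom y1 x1)
  (s2 : hom x2 y2) (t2 : hom y2 x2) (a : hom y1 y2) (b : hom x1 x2) :
  inv_pair s1 t1 -> inv_pair s2 t2 -> a · s1 = s2 · b -> b · t1 = t2 · a.
Proof.
  intros [h1 h2] [k1 k2] H.
  now rewrite <- (vcomp_idl (b · t1)), <- k1, <- !vcomp_assoc, (vcomp_assoc s2 b t1), <- H,
    <- vcomp_assoc, h2, vcomp_idr.
Qed.

Lemma square_inv_iff (C : Category) (x1 x2 y1 y2 : C) (s1 : hom x1 y1) (t1 : hom y1 x1)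
  (s2 : hom x2 y2) (t2 : hom y2 x2) (a : hom y1 y2) (b : hom x1 x2) :
  inv_pair s1 t1 -> inv_pair s2 t2 -> (a · s1 = s2 · b <-> b · t1 = t2 · a).
Proof.
  intros h1 h2; split; apply square_inv; auto using inv_pair_sym.
Qed.

Section BicatInverses.
Variable K : Bicategory.

Lemma inv_pair_whiskerr (a b c : bob K) (g g' : cell b c) (f : cell a b)
  (β : hom g g') (β' : hom g' g) :
  inv_pair β β' -> inv_pair (β ⋆ idm f) (β' ⋆ idm f).
Proof.
  intros [h1 h2]; split; rewrite <- whiskR_comp; [rewrite h1 | rewrite h2];
    apply (hc1_id (blaws K)).
Qed.

Lemma inv_pair_whiskerl (a b c : bob K) (g : cell b c) (f f' : cell a b)
  (α : hom f f') (α' : hom f' f) :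
  inv_pair α α' -> inv_pair (idm g ⋆ α) (idm g ⋆ α').
Proof.
  intros [h1 h2]; split; rewrite <- whiskL_comp; [rewrite h1 | rewrite h2];
    apply (hc1_id (blaws K)).
Qed.

Lemma inv_pair_bassoc (a b c d : bob K) (h : cell c d) (g : cell b c) (f : cell a b) :
  inv_pair (bassoc h g f) (bassoc_inv h g f).
Proof. split; [apply (bassoc_iso1 (blaws K)) | apply (bassoc_iso2 (blaws K))]. Qed.

Lemma inv_pair_unitors (a b : bob K) (f : cell a b) :
  inv_pair (bru_inv f · blu f) (blu_inv f · bru f).
Proof.
  apply inv_pair_comp; split.
  - apply (blu_iso1 (blaws K)).
  - apply (blu_iso2 (blaws K)).
  - apply (bru_iso2 (blaws K)).
  - apply (bru_iso1 (blaws K)).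
Qed.

End BicatInverses.

Section InverseHalfBraiding.
Variables (E : MonoidalCategory) (K : Bicategory) (x y : bob K)
          (F : LaxMonData E K x) (G : LaxMonData E K y) (M : cell x y).

Definition zr_hexagon_path (σ : forall X : E, hom (lmF G X ∘ M) (M ∘ lmF F X)) (Y X : E) :
  hom ((lmF G Y ∘ lmF G X) ∘ M) (M ∘ (lmF F Y ∘ lmF F X)) :=
  bassoc M (lmF F Y) (lmF F X) · (σ Y ⋆ idm (lmF F X)) · bassoc_inv (lmF G Y) M (lmF F X)
  · (idm (lmF G Y) ⋆ σ X) · bassoc (lmF G Y) (lmF G X) M.

Definition zl_hexagon_path (τ : forall X : E, hom (M ∘ lmF F X) (lmF G X ∘ M)) (Y X : E) :
  hom (M ∘ (lmF F Y ∘ lmF F X)) ((lmF G Y ∘ lmF G X) ∘ M) :=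
  bassoc_inv (lmF G Y) (lmF G X) M · (idm (lmF G Y) ⋆ τ X) · bassoc (lmF G Y) M (lmF F X)
  · (τ Y ⋆ idm (lmF F X)) · bassoc_inv M (lmF F Y) (lmF F X).

Lemma inv_pair_hexagon_paths σ τ (Y X : E) :
  (forall X, inv_pair (σ X) (τ X)) ->
  inv_pair (zr_hexagon_path σ Y X) (zl_hexagon_path τ Y X).
Proof.
  intros hστ; unfold zl_hexagon_path; rewrite <- !vcomp_assoc; unfold zr_hexagon_path.
  apply inv_pair_comp; [apply inv_pair_bassoc |].
  apply inv_pair_comp; [apply inv_pair_whiskerl, hστ |].
  apply inv_pair_comp; [apply inv_pair_sym, inv_pair_bassoc |].
  apply inv_pair_comp; [apply inv_pair_whiskerr, hστ | apply inv_pair_bassoc].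
Qed.

Lemma Zr_laws_iff_Zl_laws σ τ :
  (forall X, inv_pair (σ X) (τ X)) ->
  Zr_laws (existT _ M σ : ZrData F G) <-> Zl_laws (existT _ M τ : ZlData F G).
Proof.
  intros hστ; unfold Zr_laws, Zl_laws; simpl.
  assert (nat_iff : forall (X X' : E) (u : hom X X'),
    (idm M ⋆ fmap (lmF F) u) · σ X = σ X' · (fmap (lmF G) u ⋆ idm M) <->
    (fmap (lmF G) u ⋆ idm M) · τ X = τ X' · (idm M ⋆ fmap (lmF F) u))
    by (intros; apply square_inv_iff; auto).
  assert (hexagon_iff : forall Y X : E,
    (idm M ⋆ lmF2 F Y X) · zr_hexagon_path σ Y X = σ (tens Y X) · (lmF2 G Y X ⋆ idm M) <->
    (lmF2 G Y X ⋆ idm M) · zl_hexagon_path τ Y X = τ (tens Y X) · (idm M ⋆ lmF2 F Y X))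
    by (intros; apply square_inv_iff; auto using inv_pair_hexagon_paths).
  assert (unit_iff :
    (idm M ⋆ lmF0 F) · (bru_inv M · blu M) = σ munit · (lmF0 G ⋆ idm M) <->
    (lmF0 G ⋆ idm M) · (blu_inv M · bru M) = τ munit · (idm M ⋆ lmF0 F))
    by (apply square_inv_iff; auto using inv_pair_unitors).
  unfold zr_hexagon_path, zl_hexagon_path in hexagon_iff.
  repeat setoid_rewrite vcomp_assoc in hexagon_iff.
  rewrite !vcomp_assoc in unit_iff.
  split; intros [h1 [h2 h3]]; refine (conj _ (conj _ _)).
  - intros; apply nat_iff, h1.
  - intros; apply hexagon_iff, h2.
  - symmetry; apply unit_iff; symmetry; exact h3.
  - intros; apply nat_iff, h1.
  - intros; apply hexagon_iff, h2.
  - symmetry; apply unit_iff; symmetry; exact h3.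
Qed.

End InverseHalfBraiding.

Section StrongCenters.
Variables (E : MonoidalCategory) (K : Bicategory) (x y : bob K)
          (F : LaxMonData E K x) (G : LaxMonData E K y).

Definition Z_sl_of_Z_sr (o : Z_sr F G) : Z_sl F G :=
  let σ := projT2 (proj1_sig (proj1_sig o)) in
  let hσ := fun X => inv_of_pair (proj2_sig o X) in
  exist (fun p : Z_wl F G => forall X, is_iso (projT2 (proj1_sig p) X))
    (exist _ (existT _ (projT1 (proj1_sig (proj1_sig o))) (fun X => inv_of (proj2_sig o X)))
       (proj1 (Zr_laws_iff_Zl_laws (σ := σ) hσ) (proj2_sig (proj1_sig o))))
    (fun X => ex_intro _ (σ X) (inv_pair_sym (hσ X))).

Definition Z_sr_of_Z_sl (o : Z_sl F G) : Z_sr F G :=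
  let τ := projT2 (proj1_sig (proj1_sig o)) in
  let hτ := fun X => inv_pair_sym (inv_of_pair (proj2_sig o X)) in
  exist (fun p : Z_wr F G => forall X, is_iso (projT2 (proj1_sig p) X))
    (exist _ (existT _ (projT1 (proj1_sig (proj1_sig o))) (fun X => inv_of (proj2_sig o X)))
       (proj2 (Zr_laws_iff_Zl_laws (τ := τ) hτ) (proj2_sig (proj1_sig o))))
    (fun X => ex_intro _ (τ X) (hτ X)).

Lemma Z_sl_of_Z_sr_mor (o o' : Z_sr F G) (m : hom o o') :
  Zl_mor (p := proj1_sig (Z_sl_of_Z_sr o)) (q := proj1_sig (Z_sl_of_Z_sr o')) (proj1_sig m).
Proof.
  intros X; apply (square_inv (inv_of_pair (proj2_sig o X)) (inv_of_pair (proj2_sig o' X))).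
  exact (proj2_sig m X).
Qed.

Lemma Z_sr_of_Z_sl_mor (o o' : Z_sl F G) (m : hom o o') :
  Zr_mor (p := proj1_sig (Z_sr_of_Z_sl o)) (q := proj1_sig (Z_sr_of_Z_sl o')) (proj1_sig m).
Proof.
  intros X; apply (square_inv (inv_of_pair (proj2_sig o X)) (inv_of_pair (proj2_sig o' X))).
  exact (proj2_sig m X).
Qed.

Definition Z_sl_of_Z_sr_functor : Functor (Z_sr F G) (Z_sl F G).
Proof.
  refine {| fobj := Z_sl_of_Z_sr;
            fmap := fun o o' m => exist _ (proj1_sig m) (Z_sl_of_Z_sr_mor m) |};
    intros; now apply sig_ext.
Defined.

Definition Z_sr_of_Z_sl_functor : Functor (Z_sl F G) (Z_sr F G).
Proof.
  refine {| fobj := Z_sr_of_Z_sl;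
            fmap := fun o o' m => exist _ (proj1_sig m) (Z_sr_of_Z_sl_mor m) |};
    intros; now apply sig_ext.
Defined.

Lemma Z_sr_of_Z_slK (o : Z_sr F G) : Z_sr_of_Z_sl (Z_sl_of_Z_sr o) = o.
Proof.
  apply sig_ext, sig_ext; destruct o as [[[M σ] hlaws] hiso]; simpl.
  f_equal; apply functional_extensionality_dep; intros X.
  apply (inv_pair_unique (f := inv_of (hiso X))).
  - apply inv_of_pair.
  - apply inv_pair_sym, inv_of_pair.
Qed.

Lemma Z_sl_of_Z_srK (o : Z_sl F G) : Z_sl_of_Z_sr (Z_sr_of_Z_sl o) = o.
Proof.
  apply sig_ext, sig_ext; destruct o as [[[M τ] hlaws] hiso]; simpl.
  f_equal; apply functional_extensionality_dep; intros X.
  apply (inv_pair_unique (f := inv_of (hiso X))).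
  - apply inv_of_pair.
  - apply inv_pair_sym, inv_of_pair.
Qed.

Lemma cat_iso_Z_sr_Z_sl : cat_iso (Z_sr F G) (Z_sl F G).
Proof.
  exists Z_sl_of_Z_sr_functor, Z_sr_of_Z_sl_functor; split.
  - exists Z_sr_of_Z_slK; intros o o' m.
    apply transp_hom_fullsub, transp_hom_famcat; intros [].
    apply transp_hom_refl.
  - exists Z_sl_of_Z_srK; intros o o' m.
    apply transp_hom_fullsub, transp_hom_famcat; intros [].
    apply transp_hom_refl.
Qed.

End StrongCenters.

Section OneObjectColax.
Variables (E : MonoidalCategory) (K : Bicategory) (F G : LaxFunctor (Del E) K).
Notation LF := (laxmon_of F).
Notation LG := (laxmon_of G).

Definition colax_data (M : cell (lobj F tt) (lobj G tt))
  (s : forall X : E, hom (M ∘ lF F (a := tt) (b := tt) X) (lF G (a := tt) (b := tt) X ∘ M)) :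
  ColaxData F G :=
  {| cx1 := fun a => match a return cell (lobj F a) (lobj G a) with tt => M end;
     cx2 := fun a b => match a, b with tt, tt => s end |}.

Lemma colax_data_eta (c : ColaxData F G) :
  @colax_data (cx1 c tt) (fun X => cx2 c (a := tt) (b := tt) X) = c.
Proof.
  destruct c as [c1 c2]; unfold colax_data; simpl.
  assert (eta1 : c1 = fun a => match a return cell (lobj F a) (lobj G a) with tt => c1 tt end)
    by (apply functional_extensionality_dep; now intros []).
  revert c2; rewrite eta1; intros c2.
  assert (eta2 : (fun a b => match a, b with tt, tt => fun X => c2 tt tt X end) = c2)
    by (apply functional_extensionality_dep; intros []; apply functional_extensionality_dep;
        now intros []).
  exact (f_equal (@Build_ColaxData _ _ F G _) eta2).
Qed.

Lemma colax_laws_colax_data M s :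
  colax_laws (@colax_data M s) <-> Zl_laws (existT _ M s : ZlData LF LG).
Proof.
  split; intros [h1 [h2 h3]]; refine (conj _ (conj _ _)).
  - exact (h1 tt tt).
  - intros Y X; exact (h2 tt tt tt Y X).
  - exact (h3 tt).
  - intros [] [] f f' u; exact (h1 f f' u).
  - intros [] [] [] g f; exact (h2 g f).
  - intros []; exact h3.
Qed.

Lemma Zl_laws_of_colax (c : ColaxData F G) :
  colax_laws c ->
  Zl_laws (existT _ (cx1 c tt) (fun X => cx2 c (a := tt) (b := tt) X) : ZlData LF LG).
Proof. intros h; apply colax_laws_colax_data; now rewrite colax_data_eta. Qed.

Definition colax_of_Z_wl (p : Z_wl LF LG) : Colax F G :=
  exist _ (colax_data (projT2 (proj1_sig p)))
    (proj2 (colax_laws_colax_data _) (proj2_sig p)).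

Definition Z_wl_of_colax (c : Colax F G) : Z_wl LF LG :=
  exist _ (existT _ (cx1 (proj1_sig c) tt) (fun X => cx2 (proj1_sig c) (a := tt) (b := tt) X))
    (Zl_laws_of_colax (proj2_sig c)).

Lemma colax_modif_of_Zl_mor (p q : Z_wl LF LG) (m : hom p q) :
  colax_modif (χ := colax_of_Z_wl p) (χ' := colax_of_Z_wl q)
    (fun a => match a with tt => proj1_sig m tt end).
Proof. intros [] [] X; symmetry; exact (proj2_sig m X). Qed.

Lemma Zl_mor_of_colax_modif (c d : Colax F G) (m : hom c d) :
  Zl_mor (p := Z_wl_of_colax c) (q := Z_wl_of_colax d) (fun _ => proj1_sig m tt).
Proof. intros X; symmetry; exact (proj2_sig m tt tt X). Qed.

Definition colax_of_Z_wl_functor : Functor (Z_wl LF LG) (Colax F G).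
Proof.
  refine {| fobj := colax_of_Z_wl;
            fmap := fun p q m => exist _ _ (colax_modif_of_Zl_mor m) |};
    intros; apply sig_ext, functional_extensionality_dep; now intros [].
Defined.

Definition Z_wl_of_colax_functor : Functor (Colax F G) (Z_wl LF LG).
Proof.
  refine {| fobj := Z_wl_of_colax;
            fmap := fun c d m => exist _ _ (Zl_mor_of_colax_modif m) |};
    intros; apply sig_ext, functional_extensionality_dep; now intros [].
Defined.

Lemma Z_wl_of_colaxK :
  functor_eq (Fun_comp Z_wl_of_colax_functor colax_of_Z_wl_functor) (Fun_id_data _).
Proof.
  unshelve eexists.
  - intros [[M s] h]; now apply sig_ext.
  - intros p q m; apply transp_hom_famcat; intros []; apply transp_hom_refl.
Qed.

Lemma colax_of_Z_wlK :
  functor_eq (Fun_comp colax_of_Z_wl_functor Z_wl_of_colax_functor) (Fun_id_data _).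
Proof.
  unshelve eexists.
  - intros [c h]; apply sig_ext, colax_data_eta.
  - intros c d m; apply transp_hom_famcat; intros []; apply transp_hom_refl.
Qed.

Lemma cat_iso_Z_wl_Colax : cat_iso (Z_wl LF LG) (Colax F G).
Proof.
  exists colax_of_Z_wl_functor, Z_wl_of_colax_functor.
  exact (conj Z_wl_of_colaxK colax_of_Z_wlK).
Qed.

Lemma cat_iso_Z_sl_Pseudo : cat_iso (Z_sl LF LG) (Pseudo F G).
Proof.
  apply (cat_iso_restrict Z_wl_of_colaxK colax_of_Z_wlK).
  - intros p hiso [] [] X; exact (hiso X).
  - intros c hiso X; exact (hiso tt tt X).
Qed.

End OneObjectColax.

Section OneObjectLax.
Variables (E : MonoidalCategory) (K : Bicategory) (F G : LaxFunctor (Del E) K).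
Notation LF := (laxmon_of F).
Notation LG := (laxmon_of G).

Definition lax_data (M : cell (lobj F tt) (lobj G tt))
  (s : forall X : E, hom (lF G (a := tt) (b := tt) X ∘ M) (M ∘ lF F (a := tt) (b := tt) X)) :
  LaxData F G :=
  {| lx1 := fun a => match a return cell (lobj F a) (lobj G a) with tt => M end;
     lx2 := fun a b => match a, b with tt, tt => s end |}.

Lemma lax_data_eta (c : LaxData F G) :
  @lax_data (lx1 c tt) (fun X => lx2 c (a := tt) (b := tt) X) = c.
Proof.
  destruct c as [c1 c2]; unfold lax_data; simpl.
  assert (eta1 : c1 = fun a => match a return cell (lobj F a) (lobj G a) with tt => c1 tt end)
    by (apply functional_extensionality_dep; now intros []).
  revert c2; rewrite eta1; intros c2.
  assert (eta2 : (fun a b => match a, b with tt, tt => fun X => c2 tt tt X end) = c2)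
    by (apply functional_extensionality_dep; intros []; apply functional_extensionality_dep;
        now intros []).
  exact (f_equal (@Build_LaxData _ _ F G _) eta2).
Qed.

Lemma lax_laws_lax_data M s :
  lax_laws (@lax_data M s) <-> Zr_laws (existT _ M s : ZrData LF LG).
Proof.
  split; intros [h1 [h2 h3]]; refine (conj _ (conj _ _)).
  - exact (h1 tt tt).
  - intros Y X; exact (h2 tt tt tt Y X).
  - exact (h3 tt).
  - intros [] [] f f' u; exact (h1 f f' u).
  - intros [] [] [] g f; exact (h2 g f).
  - intros []; exact h3.
Qed.

Lemma Zr_laws_of_lax (c : LaxData F G) :
  lax_laws c ->
  Zr_laws (existT _ (lx1 c tt) (fun X => lx2 c (a := tt) (b := tt) X) : ZrData LF LG).
Proof. intros h; apply lax_laws_lax_data; now rewrite lax_data_eta. Qed.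

Definition lax_of_Z_wr (p : Z_wr LF LG) : Lax F G :=
  exist _ (lax_data (projT2 (proj1_sig p)))
    (proj2 (lax_laws_lax_data _) (proj2_sig p)).

Definition Z_wr_of_lax (c : Lax F G) : Z_wr LF LG :=
  exist _ (existT _ (lx1 (proj1_sig c) tt) (fun X => lx2 (proj1_sig c) (a := tt) (b := tt) X))
    (Zr_laws_of_lax (proj2_sig c)).

Lemma lax_modif_of_Zr_mor (p q : Z_wr LF LG) (m : hom p q) :
  lax_modif (ψ := lax_of_Z_wr p) (ψ' := lax_of_Z_wr q)
    (fun a => match a with tt => proj1_sig m tt end).
Proof. intros [] [] X; exact (proj2_sig m X). Qed.

Lemma Zr_mor_of_lax_modif (c d : Lax F G) (m : hom c d) :
  Zr_mor (p := Z_wr_of_lax c) (q := Z_wr_of_lax d) (fun _ => proj1_sig m tt).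
Proof. intros X; exact (proj2_sig m tt tt X). Qed.

Definition lax_of_Z_wr_functor : Functor (Z_wr LF LG) (Lax F G).
Proof.
  refine {| fobj := lax_of_Z_wr;
            fmap := fun p q m => exist _ _ (lax_modif_of_Zr_mor m) |};
    intros; apply sig_ext, functional_extensionality_dep; now intros [].
Defined.

Definition Z_wr_of_lax_functor : Functor (Lax F G) (Z_wr LF LG).
Proof.
  refine {| fobj := Z_wr_of_lax;
            fmap := fun c d m => exist _ _ (Zr_mor_of_lax_modif m) |};
    intros; apply sig_ext, functional_extensionality_dep; now intros [].
Defined.

Lemma Z_wr_of_laxK :
  functor_eq (Fun_comp Z_wr_of_lax_functor lax_of_Z_wr_functor) (Fun_id_data _).
Proof.
  unshelve eexists.
  - intros [[M s] h]; now apply sig_ext.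
  - intros p q m; apply transp_hom_famcat; intros []; apply transp_hom_refl.
Qed.

Lemma lax_of_Z_wrK :
  functor_eq (Fun_comp lax_of_Z_wr_functor Z_wr_of_lax_functor) (Fun_id_data _).
Proof.
  unshelve eexists.
  - intros [c h]; apply sig_ext, lax_data_eta.
  - intros c d m; apply transp_hom_famcat; intros []; apply transp_hom_refl.
Qed.

Lemma cat_iso_Z_wr_Lax : cat_iso (Z_wr LF LG) (Lax F G).
Proof.
  exists lax_of_Z_wr_functor, Z_wr_of_lax_functor.
  exact (conj Z_wr_of_laxK lax_of_Z_wrK).
Qed.

End OneObjectLax.

Theorem proposition3p7 (E : MonoidalCategory) (K : Bicategory)
  (F G : LaxFunctor (Del E) K) :
  cat_iso (Z_wl (laxmon_of F) (laxmon_of G)) (Colax F G) /\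
  cat_iso (Z_sl (laxmon_of F) (laxmon_of G)) (Pseudo F G) /\
  cat_iso (Z_wr (laxmon_of F) (laxmon_of G)) (Lax F G) /\
  cat_iso (Z_sr (laxmon_of F) (laxmon_of G)) (Pseudo F G).
Proof.
  refine (conj (cat_iso_Z_wl_Colax F G) (conj (cat_iso_Z_sl_Pseudo F G)
            (conj (cat_iso_Z_wr_Lax F G) _))).
  exact (cat_iso_trans (cat_iso_Z_sr_Z_sl _ _) (cat_iso_Z_sl_Pseudo F G)).
Qed.
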